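(* If $\mathbf c_1,\mathbf c_2\in\mathrm{GF}(q^m)^n$ and $d_{\mathrm R}(\mathbf c_1,\mathbf c_2)=r$, then $$|B_r(\mathbf c_1)\cap B_1(\mathbf c_2)|=1+(q^m-q^r){r\brack 1}+(q^r-1){n\brack 1}.$$
   Context: The rank $\mathrm{rk}(\mathbf x)$ of $\mathbf x\in\mathrm{GF}(q^m)^n$ is the maximum number of its coordinates linearly independent over $\mathrm{GF}(q)$, and $d_{\mathrm R}(\mathbf x,\mathbf y)=\mathrm{rk}(\mathbf x-\mathbf y)$. $B_r(\mathbf x)$ is the set of vectors within rank distance $r$ of $\mathbf x$. ${n\brack u}$ denotes the Gaussian binomial coefficient (number of $u$-dimensional subspaces of $\mathrm{GF}(q)^n$); in particular ${n\brack 1}=(q^n-1)/(q-1)$. *)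

From HB Require Import structures.
From mathcomp Require Import all_boot all_order all_algebra all_field.
Set Implicit Arguments. Unset Strict Implicit. Unset Printing Implicit Defensive.
Import GRing.Theory.
Local Open Scope ring_scope.

(* K is a subfield of the finite field L (this plays the role of GF(q) inside GF(q^m)). *)
Definition is_subfield (L : finFieldType) (K : {set L}) : Prop :=
  [/\ 1 \in K,
      (forall x y, x \in K -> y \in K -> x - y \in K),
      (forall x y, x \in K -> y \in K -> x * y \in K) &
      (forall x, x \in K -> x^-1 \in K)].

Definition coord_indep (L : finFieldType) (K : {set L}) (n : nat)
    (x : 'rV[L]_n) (I : {set 'I_n}) : bool :=
  [forall c : {ffun 'I_n -> L},
    [forall i in I, c i \in K] ==>
    (\sum_(i in I) c i * x ord0 i == 0) ==> [forall i in I, c i == 0]].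

Definition rk (L : finFieldType) (K : {set L}) (n : nat) (x : 'rV[L]_n) : nat :=
  \max_(I : {set 'I_n} | coord_indep K x I) #|I|.

Definition dR (L : finFieldType) (K : {set L}) (n : nat) (x y : 'rV[L]_n) : nat :=
  rk K (x - y).

Definition ballR (L : finFieldType) (K : {set L}) (n : nat) (r : nat) (x : 'rV[L]_n)
  : {set 'rV[L]_n} := [set y | dR K x y <= r]%N.

Definition gauss1 (q k : nat) : nat := ((q ^ k - 1) %/ (q - 1))%N.

(* Put d = c1 - c2 and let S be the K-span of the coordinates of d, of dimension r.
   A nonzero vector of rank at most 1 is a * v with a in L^x and v in K^n \ 0, the
   pair (a, v) being unique up to a factor in K^x; and c2 - a * v lies in B_r(c1)
   iff rk (d + a * v) <= r.  For a in S this always holds.  For a outside S the sum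
   S + K a is direct, so rk (d + a * v) <= r iff v satisfies every K-linear
   relation among the coordinates of d, i.e. v lies in a K-space of dimension r.
   Hence (q - 1) (|B_r(c1) :&: B_1(c2)| - 1) = (q^r - 1)(q^n - 1) + (q^m - q^r)(q^r - 1). *)

From HB Require Import structures.
From mathcomp Require Import all_boot all_order all_algebra all_field.
From mathcomp Require Import ring.
Set Implicit Arguments. Unset Strict Implicit. Unset Printing Implicit Defensive.
Import GRing.Theory.
Local Open Scope ring_scope.

Lemma cardsD1_in (T : finType) (A : {set T}) a : a \in A -> #|A :\ a| = #|A|.-1.
Proof. by move=> Aa; rewrite (cardsD1 a A) Aa. Qed.

Section Subfield.
Variables (L : finFieldType) (K : {set L}).
Hypothesis K_subfield : is_subfield K.

Lemma subfield1 : 1 \in K. Proof. by case: K_subfield. Qed.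

Lemma subfieldB x y : x \in K -> y \in K -> x - y \in K.
Proof. by case: K_subfield => _ + _ _; apply. Qed.

Lemma subfieldM x y : x \in K -> y \in K -> x * y \in K.
Proof. by case: K_subfield => _ _ + _; apply. Qed.

Lemma subfieldV x : x \in K -> x^-1 \in K.
Proof. by case: K_subfield => _ _ _; apply. Qed.

Lemma subfield0 : 0 \in K. Proof. by rewrite -(subrr 1) subfieldB ?subfield1. Qed.

Lemma subfieldN x : x \in K -> - x \in K.
Proof. by move=> Kx; rewrite -sub0r subfieldB ?subfield0. Qed.

Lemma subfieldD x y : x \in K -> y \in K -> x + y \in K.
Proof. by move=> Kx Ky; rewrite -(opprK y) subfieldB ?subfieldN. Qed.

Lemma subfield_sum (I : finType) (P : pred I) (F : I -> L) :
  (forall i, P i -> F i \in K) -> \sum_(i | P i) F i \in K.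
Proof.
by move=> KF; apply: (big_ind (fun x => x \in K)); [exact: subfield0 | exact: subfieldD |].
Qed.

Lemma card_subfield_gt1 : (1 < #|K|)%N.
Proof.
by apply/card_gt1P; exists 0, 1; rewrite subfield0 subfield1 eq_sym oner_eq0.
Qed.

Variable n : nat.
Implicit Types (A I J : {set 'I_n}) (z : 'I_n -> L) (c : {ffun 'I_n -> L}).

Local Notation Kcoefs A := (pffun_on 0 A (mem K)).

Lemma KcoefsP A c :
  reflect ((forall i, i \in A -> c i \in K) /\ (forall i, i \notin A -> c i = 0))
          (c \in Kcoefs A).
Proof.
apply: (iffP pffun_onP) => [[supp_c Kc]|[Kc supp_c]]; split.
- by move=> i iA; apply: Kc; apply: map_f; rewrite mem_enum.
- move=> i iA; apply/eqP; apply: contraNT iA => ci.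
  by apply: (subsetP supp_c); rewrite inE.
- by apply/subsetP => i; rewrite inE; apply: contraNT => /supp_c ->.
- by move=> y /mapP [i]; rewrite mem_enum => iA ->; apply: Kc.
Qed.

Definition Kspan A z : {set L} :=
  [set \sum_(i in A) c i * z i | c : {ffun 'I_n -> L} in Kcoefs A].

Lemma card_Kspan_le A z : (#|Kspan A z| <= #|K| ^ #|A|)%N.
Proof. by apply: leq_trans (leq_imset_card _ _) _; rewrite card_pffun_on. Qed.

Lemma Kspan0 A z : 0 \in Kspan A z.
Proof.
apply/imsetP; exists [ffun=> 0]; first by apply/KcoefsP; split=> i _; rewrite ffunE ?subfield0.
by rewrite big1 // => i _; rewrite ffunE mul0r.
Qed.

Lemma KspanD A z u v : u \in Kspan A z -> v \in Kspan A z -> u + v \in Kspan A z.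
Proof.
move=> /imsetP [c /KcoefsP [Kc c0] ->] /imsetP [c' /KcoefsP [Kc' c'0] ->].
apply/imsetP; exists [ffun i => c i + c' i].
  by apply/KcoefsP; split=> i Ai; rewrite ffunE ?subfieldD ?Kc ?Kc' ?c0 ?c'0 ?addr0.
by rewrite -big_split; apply: eq_bigr => i _; rewrite ffunE mulrDl.
Qed.

Lemma KspanZ A z k u : k \in K -> u \in Kspan A z -> k * u \in Kspan A z.
Proof.
move=> Kk /imsetP [c /KcoefsP [Kc c0] ->].
apply/imsetP; exists [ffun i => k * c i].
  by apply/KcoefsP; split=> i Ai; rewrite ffunE ?subfieldM ?Kc ?c0 ?mulr0.
by rewrite mulr_sumr; apply: eq_bigr => i _; rewrite ffunE mulrA.
Qed.

Lemma Kspan_gen A z j : j \in A -> z j \in Kspan A z.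
Proof.
move=> Aj; apply/imsetP; exists [ffun i => (i == j)%:R].
  apply/KcoefsP; split=> i Ai; rewrite ffunE; last by case: eqP Ai => // ->; rewrite Aj.
  by case: (i == j); [exact: subfield1 | exact: subfield0].
rewrite (bigD1 j) //= ffunE eqxx mul1r big1 ?addr0 // => i /andP [_ /negPf ij].
by rewrite ffunE ij mul0r.
Qed.

Lemma Kspan_sum A z J (F : 'I_n -> L) :
  (forall j, j \in J -> F j \in Kspan A z) -> \sum_(j in J) F j \in Kspan A z.
Proof.
move=> spanF; apply: (big_ind (fun x => x \in Kspan A z)) => //; [exact: Kspan0 | exact: KspanD].
Qed.

Lemma Kspan_comb A z (c : 'I_n -> L) :
  (forall i, i \in A -> c i \in K) -> \sum_(i in A) c i * z i \in Kspan A z.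
Proof. by move=> Kc; apply: Kspan_sum => i Ai; apply: KspanZ; rewrite ?Kc ?Kspan_gen. Qed.

Lemma Kspan_subset A J z y :
  (forall j, j \in J -> y j \in Kspan A z) -> Kspan J y \subset Kspan A z.
Proof.
move=> spany; apply/subsetP => _ /imsetP [c /KcoefsP [Kc _] ->].
by apply: Kspan_sum => j Jj; apply: KspanZ; [exact: Kc | exact: spany].
Qed.

Lemma notin_Kspan_coef_eq0 A z a u t : a \notin Kspan A z -> u \in Kspan A z -> t \in K ->
  u + a * t = 0 -> t = 0.
Proof.
move=> span'a span_u Kt /eqP; rewrite addr_eq0 => /eqP at_u.
apply/eqP; apply: contraNT span'a => t0.
have -> : a = - t^-1 * u by rewrite at_u mulNr mulrN opprK mulrC mulfK.
by rewrite KspanZ ?subfieldN ?subfieldV.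
Qed.

Implicit Types (x : 'rV[L]_n).

Lemma coord_indepP x I :
  reflect (forall c, (forall i, i \in I -> c i \in K) ->
             \sum_(i in I) c i * x ord0 i = 0 -> forall i, i \in I -> c i = 0)
          (coord_indep K x I).
Proof.
apply: (iffP forallP) => [indep c Kc sum0 i Ii | indep c].
  have /implyP/(_ _)/implyP := indep c; rewrite sum0 eqxx => /(_ _ isT)/forall_inP.
  by move=> /(_ (introT forall_inP Kc) i Ii)/eqP.
apply/implyP => /forall_inP Kc; apply/implyP => /eqP sum0.
by apply/forall_inP => i Ii; rewrite (indep c Kc sum0).
Qed.

Lemma card_Kspan_indep x I : coord_indep K x I -> #|Kspan I (x ord0)| = (#|K| ^ #|I|)%N.
Proof.
move=> /coord_indepP indep; rewrite card_in_imset ?card_pffun_on //.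
move=> c c' /KcoefsP [Kc c0] /KcoefsP [Kc' c'0] /= eq_sum.
apply/ffunP => i; have [Ii | I'i] := boolP (i \in I); last by rewrite c0 ?c'0.
apply/eqP; rewrite -subr_eq0; apply/eqP.
have := indep [ffun j => c j - c' j] _ _ i Ii; rewrite ffunE; apply.
  by move=> j Ij; rewrite ffunE subfieldB ?Kc ?Kc'.
under eq_bigr do rewrite ffunE mulrBl.
by rewrite sumrB eq_sum subrr.
Qed.

Lemma card_indep_leq_rk x I : coord_indep K x I -> (#|I| <= rk K x)%N.
Proof. exact: (@leq_bigmax_cond _ _ (fun I : {set 'I_n} => #|I|)). Qed.

Lemma rk_leq_Kspan x A z : (forall j, x ord0 j \in Kspan A z) -> (rk K x <= #|A|)%N.
Proof.
move=> span_x; apply/bigmax_leqP => J indepJ.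
rewrite -(leq_exp2l _ _ card_subfield_gt1) -(card_Kspan_indep indepJ).
apply: leq_trans (card_Kspan_le A z).
by apply/subset_leq_card/Kspan_subset => j _; apply: span_x.
Qed.

Lemma rk0 : rk K (0 : 'rV[L]_n) = 0%N.
Proof.
apply/eqP; rewrite -leqn0.
apply: leq_trans (@rk_leq_Kspan 0 set0 (fun=> 0) _) _; last by rewrite cards0.
by move=> j; rewrite mxE Kspan0.
Qed.

Lemma coord_indep0 x : coord_indep K x set0.
Proof. by apply/coord_indepP => c _ _ i; rewrite inE. Qed.

Lemma rk_basis x : exists2 I, coord_indep K x I & #|I| = rk K x.
Proof.
have [I indepI maxI] := arg_maxnP (fun I => #|I|) (coord_indep0 x).
exists I => //; apply/eqP; rewrite eqn_leq card_indep_leq_rk //=.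
by apply/bigmax_leqP => J /maxI.
Qed.

Lemma basis_Kspan x I : coord_indep K x I -> #|I| = rk K x ->
  forall j, x ord0 j \in Kspan I (x ord0).
Proof.
move=> indepI rkI j; have [Ij | I'j] := boolP (j \in I); first exact: Kspan_gen.
have : ~~ coord_indep K x (j |: I).
  by apply/negP => /card_indep_leq_rk; rewrite cardsU1 I'j -rkI ltnn.
apply: contraR => span'x; apply/coord_indepP => c Kc.
have KcI i : i \in I -> c i \in K by move=> Ii; rewrite Kc ?setU1r.
rewrite big_setU1 //= addrC [c j * _]mulrC => sum0.
have cj0 : c j = 0.
  by apply: notin_Kspan_coef_eq0 span'x (Kspan_comb _ KcI) (Kc _ (setU11 _ _)) sum0.
rewrite cj0 mulr0 addr0 in sum0.
by move=> i /setU1P [-> // | Ii]; apply: (coord_indepP _ _ indepI) sum0 _ Ii.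
Qed.

Lemma Kspan_set1P i z u : u \in Kspan [set i] z -> exists2 k, k \in K & u = k * z i.
Proof.
by case/imsetP=> c /KcoefsP [Kc _] ->; exists (c i); rewrite ?big_set1 ?Kc ?set11.
Qed.

Implicit Types (v : {ffun 'I_n -> L}) (e : 'rV[L]_n).

Definition Kvec : {set {ffun 'I_n -> L}} := [set v | v \in ffun_on (mem K)].

Lemma KvecP v : reflect (forall j, v j \in K) (v \in Kvec).
Proof. by rewrite inE; apply: ffun_onP. Qed.

Lemma card_Kvec : #|Kvec| = (#|K| ^ n)%N.
Proof. by rewrite cardsE card_ffun_on card_ord. Qed.

Lemma Kvec0 : 0 \in Kvec.
Proof. by apply/KvecP => j; rewrite ffunE subfield0. Qed.

Definition rank1_row (a : L) (v : {ffun 'I_n -> L}) : 'rV[L]_n := \row_j (a * v j).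

Lemma rank1_rowE a v j : rank1_row a v ord0 j = a * v j.
Proof. by rewrite mxE. Qed.

Lemma rk_rank1_row a v : v \in Kvec -> (rk K (rank1_row a v) <= 1)%N.
Proof.
move=> /KvecP Kv; have [i0 _ | n0] := pickP (@predT 'I_n).
  rewrite -(cards1 i0); apply: (rk_leq_Kspan (z := fun=> a)) => j.
  by rewrite rank1_rowE mulrC KspanZ // (Kspan_gen (fun=> a) (set11 i0)).
rewrite -(cards0 'I_n) ltnW //.
by apply: (rk_leq_Kspan (z := fun=> a)) => j; have := n0 j.
Qed.

Lemma rank1_rowP e : e != 0 -> (rk K e <= 1)%N ->
  exists i0, exists2 v, v \in Kvec /\ v i0 = 1 & e ord0 i0 != 0 /\ e = rank1_row (e ord0 i0) v.
Proof.
move=> e0 rk_e; have [i0 ei0] : exists i0, e ord0 i0 != 0.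
  apply/existsP; apply: contraR e0 => /existsPn e0; apply/eqP/rowP => j.
  by rewrite mxE; apply/eqP; rewrite -[_ == _]negbK e0.
have indep_i0 : coord_indep K e [set i0].
  apply/coord_indepP => c _; rewrite big_set1 => /eqP.
  by rewrite mulf_eq0 (negPf ei0) orbF => /eqP ci0 i /set1P ->.
have rk_i0 : #|[set i0]| = rk K e.
  by apply/eqP; rewrite eqn_leq card_indep_leq_rk // cards1 rk_e.
exists i0, [ffun j => e ord0 j / e ord0 i0]; split; rewrite ?ffunE ?divff //.
- apply/KvecP => j; rewrite ffunE.
  by have [k Kk ->] := Kspan_set1P (basis_Kspan indep_i0 rk_i0 j); rewrite mulfK.
- by apply/rowP => j; rewrite !mxE ord1 ffunE mulrC divfK.
Qed.

Lemma rank1_row_eq0 a v : a != 0 -> (rank1_row a v == 0) = (v == 0).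
Proof.
move=> a0; apply/eqP/eqP => [/rowP e0 | ->].
  apply/ffunP => j; have /eqP := e0 j.
  by rewrite rank1_rowE mxE ffunE mulf_eq0 (negPf a0) => /eqP.
by apply/rowP => j; rewrite rank1_rowE mxE ffunE mulr0.
Qed.

Definition rank1_pairs : {set L * {ffun 'I_n -> L}} :=
  [set p : L * {ffun 'I_n -> L} | [&& p.1 != 0, p.2 != 0 & p.2 \in Kvec]].

Lemma card_rank1_fiber e : e != 0 -> (rk K e <= 1)%N ->
  #|[set p in rank1_pairs | rank1_row p.1 p.2 == e]| = (#|K| - 1)%N.
Proof.
move=> e0 rk_e; have [i0 [v0 [Kv0 v0i0] [ei0 eE]]] := rank1_rowP e0 rk_e.
set a0 := e ord0 i0 in ei0 eE.
have -> : [set p in rank1_pairs | rank1_row p.1 p.2 == e] =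
          [set (a0 / t, [ffun j => t * v0 j]) | t in K :\ 0].
  apply/setP => -[b w]; rewrite !inE /=; apply/idP/imsetP.
  - case/andP=> /and3P [b0 w0 /ffun_onP Kw] /eqP bw_e.
    have bw j : b * w j = a0 * v0 j by move/rowP: bw_e => /(_ j); rewrite eE !mxE.
    have bwi0 : b * w i0 = a0 by rewrite bw v0i0 mulr1.
    have wi0 : w i0 != 0 by apply: contraNneq ei0 => wi0; rewrite -bwi0 wi0 mulr0.
    exists (w i0); first by rewrite !inE wi0 Kw.
    congr (_, _); first by rewrite -bwi0 mulfK.
    by apply/ffunP => j; rewrite ffunE; apply: (mulfI b0); rewrite bw mulrA bwi0.
  - case=> t /setD1P [t0 Kt] [-> ->].
    have tv0_e : rank1_row (a0 / t) [ffun j => t * v0 j] = e.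
      by rewrite eE; apply/rowP => j; rewrite !mxE ffunE mulrA divfK.
    rewrite tv0_e eqxx andbT mulf_neq0 ?invr_eq0 //=.
    rewrite -(rank1_row_eq0 _ (mulf_neq0 ei0 (invr_neq0 t0))) tv0_e e0 /=.
    by apply/ffun_onP => j; rewrite ffunE subfieldM //; apply/KvecP.
rewrite card_imset; last by move=> t t' [/(mulfI ei0)/invr_inj].
by rewrite cardsD1_in ?subfield0 ?subn1.
Qed.

Lemma card_rank1_pairs (Q : pred 'rV[L]_n) :
  #|[set p in rank1_pairs | Q (rank1_row p.1 p.2)]| =
  ((#|K| - 1) * #|[set e | (rk K e <= 1)%N && Q e] :\ 0%R|)%N.
Proof.
rewrite -sum1_card (partition_big (fun p => rank1_row p.1 p.2)
                      (mem ([set e | (rk K e <= 1)%N && Q e] :\ 0))) /=; last first.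
  move=> [a v]; rewrite !inE /= => /andP [/and3P [a0 v0 Kv] Qav].
  by rewrite rank1_row_eq0 // v0 Qav rk_rank1_row ?inE.
rewrite mulnC -sum_nat_const; apply: eq_bigr => e /setD1P [e0]; rewrite inE => /andP [rk_e Qe].
rewrite -(card_rank1_fiber e0 rk_e) sum1dep_card; apply: eq_card => -[a v] /=.
rewrite !inE /=; have [-> | _] := eqVneq (rank1_row a v) e; last by rewrite !andbF.
by rewrite Qe andbT.
Qed.

Section RankOneShift.
Variables (d : 'rV[L]_n) (I : {set 'I_n}).
Hypotheses (d_indep : coord_indep K d I) (d_rk : #|I| = rk K d).

Local Notation S := (Kspan I (d ord0)).

Lemma shiftE a v i : (d + rank1_row a v) ord0 i = d ord0 i + a * v i.
Proof. by rewrite mxE rank1_rowE. Qed.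

Lemma d_coefs_ex j : exists c, (c \in Kcoefs I) && (d ord0 j == \sum_(i in I) c i * d ord0 i).
Proof. by have /imsetP [c Ic ->] := basis_Kspan d_indep d_rk j; exists c; rewrite Ic eqxx. Qed.

Definition d_coef j : {ffun 'I_n -> L} := xchoose (d_coefs_ex j).

Lemma d_coefK j i : d_coef j i \in K.
Proof.
have /andP [/KcoefsP [Kc c0] _] := xchooseP (d_coefs_ex j).
by have [/Kc | /c0 ->] := boolP (i \in I); last exact: subfield0.
Qed.

Lemma d_coefE j : d ord0 j = \sum_(i in I) d_coef j i * d ord0 i.
Proof. by have /andP [_ /eqP] := xchooseP (d_coefs_ex j). Qed.

Definition rel_Kvec : {set {ffun 'I_n -> L}} :=
  [set v in Kvec | [forall j, (j \notin I) ==> (v j == \sum_(i in I) d_coef j i * v i)]].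

Lemma card_rel_Kvec : #|rel_Kvec| = (#|K| ^ #|I|)%N.
Proof.
pose ext (w : {ffun 'I_n -> L}) : {ffun 'I_n -> L} :=
  [ffun j => if j \in I then w j else \sum_(i in I) d_coef j i * w i].
have -> : rel_Kvec = [set ext w | w in Kcoefs I].
  apply/setP => v; rewrite inE; apply/andP/imsetP => [[/KvecP Kv /forall_inP rel_v] |].
    exists [ffun j => if j \in I then v j else 0].
      by apply/KcoefsP; split=> i Ii; rewrite ffunE ?Ii ?Kv // (negPf Ii).
    apply/ffunP => j; rewrite !ffunE; case: ifP => Ij; first by rewrite Ij.
    by rewrite (eqP (rel_v j _)) ?Ij //; apply: eq_bigr => i Ii; rewrite ffunE Ii.
  case=> w /KcoefsP [Kw w0] ->; split.
    apply/KvecP => j; rewrite ffunE; case: ifP => [/Kw // | _].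
    by apply: subfield_sum => i Ii; rewrite subfieldM ?d_coefK ?Kw.
  apply/forall_inP => j I'j; rewrite ffunE (negPf I'j).
  by apply/eqP/eq_bigr => i Ii; rewrite ffunE Ii.
rewrite card_in_imset ?card_pffun_on //.
move=> w w' /KcoefsP [_ w0] /KcoefsP [_ w'0] /ffunP eq_ext; apply/ffunP => j.
by have [Ij | I'j] := boolP (j \in I); [have := eq_ext j; rewrite !ffunE Ij | rewrite w0 ?w'0].
Qed.

Lemma rk_shift_in_span a v : a \in S -> v \in Kvec -> (rk K (d + rank1_row a v) <= #|I|)%N.
Proof.
move=> Sa /KvecP Kv; apply: (rk_leq_Kspan (z := d ord0)) => j.
by rewrite shiftE KspanD ?basis_Kspan // mulrC KspanZ.
Qed.

Lemma rk_shift_rel a v : v \in rel_Kvec -> (rk K (d + rank1_row a v) <= #|I|)%N.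
Proof.
case/setIdP=> _ /forall_inP rel_v; apply: (rk_leq_Kspan (z := (d + rank1_row a v) ord0)) => j.
have [Ij | I'j] := boolP (j \in I); first exact: Kspan_gen.
have -> : (d + rank1_row a v) ord0 j = \sum_(i in I) d_coef j i * (d + rank1_row a v) ord0 i.
  rewrite shiftE (eqP (rel_v j I'j)) d_coefE mulr_sumr -big_split.
  by apply: eq_bigr => i _; rewrite shiftE mulrDr mulrCA.
by apply: Kspan_comb => i _; apply: d_coefK.
Qed.

Lemma shift_indep a v j : a \notin S -> v \in Kvec -> j \notin I ->
  v j != \sum_(i in I) d_coef j i * v i -> coord_indep K (d + rank1_row a v) (j |: I).
Proof.
move=> S'a /KvecP Kv I'j vj_rel; apply/coord_indepP => c Kc.
have KcI i : i \in I -> c i \in K by move=> Ii; rewrite Kc ?setU1r.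
have Kcj : c j \in K by rewrite Kc ?setU11.
have Kcoef_u i : i \in I -> c i + c j * d_coef j i \in K.
  by move=> Ii; apply: subfieldD (KcI _ Ii) (subfieldM Kcj (d_coefK _ _)).
pose u := \sum_(i in I) (c i + c j * d_coef j i) * d ord0 i.
pose t := \sum_(i in I) c i * v i + c j * v j.
have -> : \sum_(i in j |: I) c i * (d + rank1_row a v) ord0 i = u + a * t.
  have sumI : \sum_(i in I) c i * (d + rank1_row a v) ord0 i =
               \sum_(i in I) c i * d ord0 i + a * \sum_(i in I) c i * v i.
    by rewrite mulr_sumr -big_split; apply: eq_bigr => i _; rewrite shiftE mulrDr mulrCA.
  have uE : u = \sum_(i in I) c i * d ord0 i + c j * \sum_(i in I) d_coef j i * d ord0 i.
    by rewrite mulr_sumr -big_split; apply: eq_bigr => i _; rewrite mulrDl mulrA.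
  by rewrite big_setU1 //= sumI uE shiftE [d ord0 j]d_coefE /t; ring.
move=> sum0.
have t0 : t = 0.
  apply: notin_Kspan_coef_eq0 S'a _ _ sum0.
    exact: (@Kspan_comb I (d ord0) (fun i => c i + c j * d_coef j i)).
  by rewrite subfieldD ?subfieldM ?Kv // subfield_sum // => i Ii; rewrite subfieldM ?KcI.
have u0 : u = 0 by move: sum0; rewrite t0 mulr0 addr0.
have cI i : i \in I -> c i = - (c j * d_coef j i).
  move=> Ii; apply/eqP; rewrite -addr_eq0; apply/eqP.
  have := coord_indepP _ _ d_indep [ffun k => c k + c j * d_coef j k] _ _ i Ii.
  rewrite ffunE; apply.
    by move=> k Ik; rewrite ffunE Kcoef_u.
  by rewrite -[RHS]u0; apply: eq_bigr => k _; rewrite ffunE.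
have cj0 : c j = 0.
  have : c j * (v j - \sum_(i in I) d_coef j i * v i) = 0.
    rewrite -[RHS]t0 /t mulrBr addrC; congr (_ + _).
    by rewrite mulr_sumr -sumrN; apply: eq_bigr => i Ii; rewrite (cI i Ii) mulNr mulrA.
  by move/eqP; rewrite mulf_eq0 subr_eq0 (negPf vj_rel) orbF => /eqP.
by move=> i /setU1P [-> // | /cI ->]; rewrite cj0 mul0r oppr0.
Qed.

Lemma rk_shift_notin_span a v : a \notin S -> v \in Kvec ->
  (rk K (d + rank1_row a v) <= #|I|)%N = (v \in rel_Kvec).
Proof.
move=> S'a Kv; apply/idP/idP => [| /rk_shift_rel //]; apply: contraTT => rel'v.
rewrite inE Kv /= in rel'v; have /forall_inPn [j I'j vj] := rel'v.
rewrite -ltnNge; apply: leq_trans (card_indep_leq_rk (shift_indep S'a Kv I'j vj)).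
by rewrite cardsU1 (I'j : j \notin I).
Qed.

Definition shift_pairs : {set L * {ffun 'I_n -> L}} :=
  [set p in rank1_pairs | (rk K (d + rank1_row p.1 p.2) <= #|I|)%N].

Lemma card_shift_fiber_in a : a \in S :\ 0 ->
  #|[set v | (a, v) \in shift_pairs]| = (#|K| ^ n - 1)%N.
Proof.
case/setD1P=> a0 Sa; rewrite -card_Kvec subn1 -(cardsD1_in Kvec0).
apply: eq_card => v; rewrite !inE -andbA /= a0 /=.
by apply/andb_idr => /andP [_ Kv]; rewrite rk_shift_in_span ?inE.
Qed.

Lemma card_shift_fiber_out a : a \notin S ->
  #|[set v | (a, v) \in shift_pairs]| = (#|K| ^ #|I| - 1)%N.
Proof.
move=> S'a; have a0 : a != 0 by apply: contraNneq S'a => ->; apply: Kspan0.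
have rel0 : 0 \in rel_Kvec.
  rewrite inE Kvec0; apply/forall_inP => j _.
  by rewrite ffunE big1 // => i _; rewrite ffunE mulr0.
rewrite -card_rel_Kvec subn1 -(cardsD1_in rel0).
apply: eq_card => v; rewrite inE [_ \in shift_pairs]inE inE in_setD1 /= a0 /=.
have [Kv | K'v] := boolP (v \in Kvec); last by rewrite andbF /= inE (negPf K'v) andbF.
by rewrite andbT rk_shift_notin_span.
Qed.

Lemma card_shift_pairs : #|shift_pairs| =
  ((#|K| ^ #|I| - 1) * (#|K| ^ n - 1) + (#|L| - #|K| ^ #|I|) * (#|K| ^ #|I| - 1))%N.
Proof.
have -> : #|shift_pairs| = (\sum_a #|[set v | (a, v) \in shift_pairs]|)%N.
  rewrite -sum1_card big_mkcond /=.
  transitivity (\sum_a \sum_v (if (a, v) \in shift_pairs then 1 else 0))%N.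
    by rewrite pair_big /=; apply: eq_bigr => -[a v].
  by apply: eq_bigr => a _; rewrite -big_mkcond /= sum1dep_card.
rewrite (bigID (mem S)) /= -/(\sum_(a in S) _)%N (big_setD1 0 (Kspan0 _ _)) /=.
have -> : #|[set v | (0, v) \in shift_pairs]| = 0%N.
  by apply: eq_card0 => v; rewrite !inE eqxx.
rewrite (eq_bigr _ card_shift_fiber_in) sum_nat_const.
rewrite (eq_bigr _ card_shift_fiber_out) sum_nat_const.
have card_S : #|S| = (#|K| ^ #|I|)%N := card_Kspan_indep d_indep.
have -> : #|[pred a | a \notin S]| = (#|L| - #|K| ^ #|I|)%N by rewrite -(cardC S) card_S addKn.
by rewrite (cardsD1_in (Kspan0 I (d ord0))) card_S -subn1.
Qed.

End RankOneShift.
End Subfield.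

Lemma gauss1K q k : (gauss1 q k * (q - 1) = q ^ k - 1)%N.
Proof.
by rewrite /gauss1 divnK // !subn1 /= predn_exp dvdn_mulr.
Qed.

Lemma ballR_ball1_meet (L : finFieldType) (K : {set L}) n r (c1 c2 : 'rV[L]_n) :
  ballR K r c1 :&: ballR K 1 c2 =
  [set c2 - e | e in [set e | (rk K e <= 1)%N && (rk K (c1 - c2 + e) <= r)%N]].
Proof.
have c2K : involutive (fun e : 'rV[L]_n => c2 - e) by move=> e; rewrite opprB addrC subrK.
rewrite (can_imset_pre _ c2K); apply/setP => y; rewrite !inE /dR andbC.
by rewrite addrA subrK.
Qed.

Theorem proposition3 (L : finFieldType) (K : {set L}) (m n r : nat)
    (c1 c2 : 'rV[L]_n) :
  is_subfield K ->
  #|L| = (#|K| ^ m)%N ->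
  dR K c1 c2 = r ->
  #|ballR K r c1 :&: ballR K 1 c2| =
    (1 + (#|K| ^ m - #|K| ^ r) * gauss1 #|K| r
       + (#|K| ^ r - 1) * gauss1 #|K| n)%N.
Proof.
move=> K_subfield card_L dist_c.
set d := c1 - c2; have [I d_indep d_rk] := rk_basis K d.
have card_I : #|I| = r by rewrite d_rk.
set T := [set e | (rk K e <= 1)%N && (rk K (d + e) <= r)%N].
rewrite ballR_ball1_meet -/d -/T card_imset; last exact/inj_comp/oppr_inj/addrI.
have T0 : 0 \in T by rewrite inE addr0 (rk0 K_subfield) -d_rk card_I leqnn.
rewrite (cardsD1 0) T0 -addnA; congr (_ + _)%N.
have := card_rank1_pairs K_subfield (fun e => (rk K (d + e) <= #|I|)%N).
rewrite (card_shift_pairs K_subfield d_indep d_rk) card_I card_L => count_pairs.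
have q1_gt0 : (0 < #|K| - 1)%N by rewrite subn_gt0 card_subfield_gt1.
apply/eqP; rewrite -(eqn_pmul2l q1_gt0) -count_pairs.
by rewrite mulnDr !(mulnCA (#|K| - 1)%N) ![((#|K| - 1) * gauss1 _ _)%N]mulnC !gauss1K addnC.
Qed.
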